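(* Let $P=\sum_{i=1}^nx^i\,dx^i\otimes\partial_{x^i}$, i.e. $P=\mathrm{diag}\{x^1,\dots,x^n\}$, on $\mathbb R^n$; it is a Nijenhuis operator on the tangent Lie algebroid $(T_{\mathbb R^n},[-,-],\mathrm{id})$. Then the Frölicher–Nijenhuis cohomology of $P$ vanishes in all degrees: $\mathrm H^k_{\mathrm{FN}}(T_{\mathbb R^n})=0$ for all $k\ge0$, i.e. the complex $(\Omega^\bullet(\mathbb R^n,T_{\mathbb R^n}),d_{\mathrm{FN}}=[P,-]_{\mathrm{FN}})$ is exact.
   Context: $\Omega^k(\mathbb R^n,T_{\mathbb R^n})=\Gamma(\wedge^kT^\vee_{\mathbb R^n}\otimes T_{\mathbb R^n})$ is the space of vector-valued $k$-forms. The Frölicher–Nijenhuis bracket is the $\mathbb R$-bilinear bracket given on $K=\alpha\otimes X$ ($\alpha$ a $k$-form, $X$ a vector field) and $L=\beta\otimes Y$ ($\beta$ an $l$-form) by $[K,L]_{\mathrm{FN}}=\alpha\wedge\beta\otimes[X,Y]+\alpha\wedge\mathcal L_X\beta\otimes Y-\mathcal L_Y\alpha\wedge\beta\otimes X+(-1)^kd\alpha\wedge i_X\beta\otimes Y+(-1)^ki_Y\alpha\wedge d\beta\otimes X$, where $d$ is the de Rham differential, $i_X$ contraction and $\mathcal L_X=i_Xd+di_X$ the Lie derivative. For a Nijenhuis operator $P$ (i.e. $[P,P]_{\mathrm{FN}}=0$), $d_{\mathrm{FN}}=[P,-]_{\mathrm{FN}}$ is a differential of degree $1$ and $\mathrm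 H^\bullet_{\mathrm{FN}}(T_{\mathbb R^n})$ denotes its cohomology. *)

From HB Require Import structures.
From mathcomp Require Import all_boot all_order all_algebra all_fingroup.
From mathcomp Require Import all_classical all_reals all_analysis.
Set Implicit Arguments. Unset Strict Implicit. Unset Printing Implicit Defensive.
Import Order.TTheory GRing.Theory Num.Theory.
Import numFieldNormedType.Exports.
Local Open Scope ring_scope.

Section FN.
Variables (R : realType) (n : nat).

Definition pt := 'rV[R]_n.
Definition ebasis (j : 'I_n) : pt := delta_mx 0 j.
Definition partial (j : 'I_n) (f : pt -> R) : pt -> R :=
  fun x => derive f x (ebasis j).
Definition iter_partial (l : seq 'I_n) (f : pt -> R) : pt -> R :=
  foldr partial f l.
Definition smooth (f : pt -> R) : Prop :=
  forall (l : seq 'I_n) (x : pt), differentiable (iter_partial l f) x.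

(* A (possibly inhomogeneous) differential form on R^n, given by its values
   alpha x [:: j1; ...; jk] = alpha_x(d_{j1}, ..., d_{jk}) on coordinate vector
   fields; the value on a sequence of length k is the degree-k component. *)
Definition form := pt -> seq 'I_n -> R.
Definition vfield := 'I_n -> pt -> R.
(* vector-valued forms K = sum_i K i (x) d_{x^i} *)
Definition vform := 'I_n -> form.

Definition permute (s : seq 'I_n) (sg : 'S_(size s)) : seq 'I_n :=
  [seq tnth (in_tuple s) (sg i) | i <- enum 'I_(size s)].
Definition psign (m : nat) (sg : 'S_m) : R := (-1) ^+ odd_perm sg.

Definition is_form (k : nat) (a : form) : Prop :=
  [/\ forall s, smooth (fun x => a x s),
      forall x s (sg : 'S_(size s)), a x (permute sg) = psign sg * a x s
    & forall x s, size s != k -> a x s = 0].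
Definition is_vform (k : nat) (K : vform) : Prop := forall i, is_form k (K i).

Definition wedge (a b : form) : form := fun x s =>
  \sum_(k < (size s).+1)
     ((k`!)%:R * ((size s - k)`!)%:R)^-1 *
     \sum_(sg : 'S_(size s))
        psign sg * a x (take k (permute sg)) * b x (drop k (permute sg)).

Definition dR (a : form) : form := fun x s =>
  \sum_(j < size s) (-1) ^+ j *
     partial (tnth (in_tuple s) j) (fun y => a y (take j s ++ drop j.+1 s)) x.

Definition contr (X : vfield) (a : form) : form := fun x s =>
  \sum_(m < n) X m x * a x (m :: s).

Definition addf (a b : form) : form := fun x s => a x s + b x s.

Definition lieD (X : vfield) (a : form) : form :=
  addf (contr X (dR a)) (dR (contr X a)).

Definition lieb (X Y : vfield) : vfield := fun m x =>
  \sum_(j < n) (X j x * partial j (Y m) x - Y j x * partial j (X m) x).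

Definition fn_dec (k : nat) (a : form) (X : vfield) (b : form) (Y : vfield)
  : vform := fun i x s =>
    wedge a b x s * lieb X Y i x
  + wedge a (lieD X b) x s * Y i x
  - wedge (lieD Y a) b x s * X i x
  + (-1) ^+ k * wedge (dR a) (contr X b) x s * Y i x
  + (-1) ^+ k * wedge (contr Y a) (dR b) x s * X i x.

Definition coordvf (a : 'I_n) : vfield := fun m _ => (m == a)%:R.

Definition fnb (k : nat) (K L : vform) : vform := fun i x s =>
  \sum_(a < n) \sum_(b < n) fn_dec k (K a) (coordvf a) (L b) (coordvf b) i x s.

Definition vzero : vform := fun _ _ _ => 0.

Definition Pdiag : vform := fun i x s => (s == [:: i])%:R * x ord0 i.

Definition dFN (L : vform) : vform := fnb 1 Pdiag L.

End FN.

(* P = diag(x^1, ..., x^n) has the coordinates as eigenvalues, which makes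
   d_FN explicit: for L = Σ_i L_i ⊗ ∂_i,
     (d_FN L)_i(∂_s0, ..., ∂_sk)
       = Σ_p (-1)^p ((x^sp - x^i) ∂_sp L_i(..^p..) - [sp = i] L_i(..^p..)),
   where ..^p.. omits the p-th argument.  Evaluating d_FN L = 0 on (∂_i, s)
   shows that L = d_FN M for M_i := - i_∂i L_i, which has one degree less and
   is again smooth and alternating.  In degree 0 the formula for d_FN M is an
   empty sum, so L = 0. *)

From Pilot Require Import Defs.
From HB Require Import structures.
From mathcomp Require Import all_boot all_order all_algebra all_fingroup.
From mathcomp Require Import all_classical all_reals all_analysis.
From mathcomp Require Import ring.
Import Order.TTheory GRing.Theory Num.Theory.
Import numFieldNormedType.Exports.
Local Open Scope ring_scope.
Set Implicit Arguments. Unset Strict Implicit. Unset Printing Implicit Defensive.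

Section RemNth.
Variable T : Type.
Implicit Types (s : seq T).

Definition rem_nth p s := take p s ++ drop p.+1 s.

Lemma rem_nth0 (a : T) s : rem_nth 0 (a :: s) = s.
Proof. by rewrite /rem_nth /= drop0. Qed.

Lemma rem_nth_cons p (a : T) s : rem_nth p.+1 (a :: s) = a :: rem_nth p s.
Proof. by []. Qed.

Lemma size_rem_nth p s : (p < size s)%N -> size (rem_nth p s) = (size s).-1.
Proof.
move=> ltps; rewrite /rem_nth size_cat size_take ltps size_drop.
by case: (size s) ltps => // m ltpm; rewrite subSS /= subnKC.
Qed.

Lemma nth_rem_nth x0 p s i : (p < size s)%N ->
  nth x0 (rem_nth p s) i = nth x0 s (bump p i).
Proof.
move=> ltps; rewrite /rem_nth nth_cat size_take ltps /bump.
case: (ltnP i p) => [ltip | leqpi]; first by rewrite nth_take.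
by rewrite nth_drop add1n addSn subnKC.
Qed.

Definition perm_seq x0 m (sg : 'S_m) s := [seq nth x0 s (sg i) | i <- enum 'I_m].

Lemma size_perm_seq x0 m (sg : 'S_m) s : size (perm_seq x0 sg s) = m.
Proof. by rewrite size_map size_enum_ord. Qed.

Lemma nth_perm_seq x0 m (sg : 'S_m) s (i : 'I_m) :
  nth x0 (perm_seq x0 sg s) i = nth x0 s (sg i).
Proof.
rewrite (nth_map i) ?size_enum_ord //; congr (nth _ _ (val (sg _))).
by apply: val_inj; rewrite /= nth_enum_ord.
Qed.

Lemma rem_nth_perm_seq x0 m s (j p : 'I_m.+1) (tau : 'S_m) : size s = m.+1 ->
  rem_nth j (perm_seq x0 (lift_perm j p tau) s) = perm_seq x0 tau (rem_nth p s).
Proof.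
move=> sz_s; apply: (@eq_from_nth _ x0).
  by rewrite size_rem_nth ?size_perm_seq // size_rem_nth sz_s.
move=> i; rewrite size_rem_nth ?size_perm_seq // => /= ltim.
rewrite nth_rem_nth ?size_perm_seq //.
rewrite -[bump j i]/(nat_of_ord (lift j (Ordinal ltim))).
rewrite -[i]/(nat_of_ord (Ordinal ltim)).
by rewrite !nth_perm_seq lift_perm_lift nth_rem_nth ?sz_s.
Qed.

Lemma perm_seq_lift0 x0 m s (p : 'I_m.+1) (tau : 'S_m) : size s = m.+1 ->
  perm_seq x0 (lift_perm ord0 p tau) s = nth x0 s p :: perm_seq x0 tau (rem_nth p s).
Proof.
move=> sz_s; rewrite -(rem_nth_perm_seq x0 ord0) //.
have := nth_perm_seq x0 (lift_perm ord0 p tau) s ord0; rewrite lift_perm_id => <-.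
have : size (perm_seq x0 (lift_perm ord0 p tau) s) = m.+1 by rewrite size_perm_seq.
by case: (perm_seq _ _ _) => [|a u] //= _; rewrite rem_nth0.
Qed.

End RemNth.

Section UnliftPerm.
Variable m : nat.
Implicit Types (j p : 'I_m.+1) (s : 'S_m.+1) (tau : 'S_m).

Definition unlift_perm_fun j s k := odflt k (unlift (s j) (s (lift j k))).

Lemma lift_unlift_perm_fun j s k : lift (s j) (unlift_perm_fun j s k) = s (lift j k).
Proof.
rewrite /unlift_perm_fun; have:= neq_lift j k.
by rewrite -(can_eq (permK s)) => /unlift_some[] ? ? ->.
Qed.

Lemma unlift_perm_fun_inj j s : injective (unlift_perm_fun j s).
Proof.
apply: can_inj (unlift_perm_fun (s j) s^-1%g) _ => k.
by rewrite {1}/unlift_perm_fun lift_unlift_perm_fun !permK liftK.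
Qed.

Definition unlift_perm j s : 'S_m := perm (@unlift_perm_fun_inj j s).

Lemma lift_unlift_perm j s : lift_perm j (s j) (unlift_perm j s) = s.
Proof.
apply/permP => k; case: (unliftP j k) => [k'|] ->; rewrite ?lift_perm_id //.
by rewrite lift_perm_lift permE lift_unlift_perm_fun.
Qed.

Lemma unlift_lift_perm j p tau : unlift_perm j (lift_perm j p tau) = tau.
Proof.
by apply/permP => k; rewrite permE /unlift_perm_fun lift_perm_lift lift_perm_id liftK.
Qed.

End UnliftPerm.

Lemma sum_perm_lift (V : nmodType) m (j : 'I_m.+1) (F : 'S_m.+1 -> V) :
  \sum_(sg : 'S_m.+1) F sg = \sum_(p < m.+1) \sum_(tau : 'S_m) F (lift_perm j p tau).
Proof.
rewrite (partition_big (fun sg : 'S_m.+1 => sg j) predT) //=; apply: eq_bigr => p _.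
rewrite (reindex (lift_perm j p)) /=; last first.
  exists (unlift_perm j) => [tau _ | s /eqP sj]; first exact: unlift_lift_perm.
  by rewrite -{1}sj lift_unlift_perm.
by apply: eq_bigl => tau; rewrite lift_perm_id eqxx.
Qed.

Lemma sqr1_mulK (R : comPzRingType) (u e c d : R) :
  u ^+ 2 = 1 -> e * u * c * (u * d) = e * c * d.
Proof. by move=> u2; rewrite -[RHS]mulr1 -u2; ring. Qed.

Lemma sum_delta (R : pzRingType) m (i : 'I_m) (F : 'I_m -> R) :
  \sum_(j < m) (i == j)%:R * F j = F i.
Proof.
rewrite (bigD1 i) //= eqxx mul1r big1 ?addr0 // => j ij.
by rewrite eq_sym (negbTE ij) mul0r.
Qed.

Section Calculus.
Variables (R : realType) (n : nat).
Implicit Types (f : pt R n -> R) (x : pt R n).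

Lemma derive_affine f x v (c : R) :
  (forall h : R, f (h *: v + x) = f x + h * c) -> derive f x v = c.
Proof.
move=> f_affine; apply: cvg_lim => //; apply: cvg_near_cst; near=> h.
have h_neq0 : h != 0 by near: h; exact: nbhs_dnbhs_neq.
by rewrite /= f_affine addrC addKr [_ *: _]mulrA mulVf // mul1r.
Unshelve. all: by end_near.
Qed.

Lemma partial_cst (j : 'I_n) (c : R) x : partial j (fun=> c) x = 0.
Proof. exact: derive_cst. Qed.

Lemma partial_coord (j a : 'I_n) (c : R) x :
  partial j (fun y => c * y ord0 a) x = c * (a == j)%:R.
Proof.
apply: derive_affine => h.
have -> : (h *: ebasis R j + x) ord0 a = h * ebasis R j ord0 a + x ord0 a.
  by rewrite [LHS]mxE [X in X + _]mxE.
by rewrite /ebasis mxE eqxx /= mulrDr addrC mulrCA.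
Qed.

Lemma smooth_derivable f : smooth f -> forall x v, derivable f x v.
Proof. by move=> f_smooth x v; apply: diff_derivable; exact: (f_smooth [::] x). Qed.

Lemma partialZ f (c : R) j x : derivable f x (ebasis R j) ->
  partial j (fun y => c * f y) x = c * partial j f x.
Proof. exact: deriveZ. Qed.

Lemma partialN f j x : derivable f x (ebasis R j) ->
  partial j (fun y => - f y) x = - partial j f x.
Proof. exact: deriveN. Qed.

Lemma smoothN f : smooth f -> smooth (fun y => - f y).
Proof.
move=> f_smooth.
have iter_partialN l : iter_partial l (fun y => - f y) = fun y => - iter_partial l f y.
  elim: l => [|j l IHl] //=; rewrite IHl; apply: funext => y.
  by apply: partialN; apply: diff_derivable; exact: f_smooth.
by move=> l x; rewrite iter_partialN; apply: differentiableN; exact: f_smooth.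
Qed.

End Calculus.

Section Forms.
Variables (R : realType) (n : nat).
Implicit Types (b : Defs.form R n) (c : 'I_n) (s : seq 'I_n) (x : pt R n).
Local Notation coordvf := (@coordvf R n).
Local Notation Pdiag := (@Pdiag R n).

Lemma dRE (x0 : 'I_n) b x s : dR b x s =
  \sum_(0 <= j < size s) (-1) ^+ j * partial (nth x0 s j) (fun y => b y (rem_nth j s)) x.
Proof. by rewrite /dR big_mkord; apply: eq_bigr => j _; rewrite (tnth_nth x0). Qed.

Lemma contr_coordE c b : contr (coordvf c) b = fun x s => b x (c :: s).
Proof.
apply: funext => x; apply: funext => s.
rewrite /contr /coordvf (bigD1 c) //= eqxx mul1r big1 ?addr0 // => m /negbTE ->.
by rewrite mul0r.
Qed.

Lemma lieb_coord c c' i x : lieb (coordvf c) (coordvf c') i x = 0.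
Proof. by rewrite /lieb big1 // => j _; rewrite !partial_cst !mulr0 subrr. Qed.

(* In Cartan's formula for the constant field ∂_c, the terms of [d (i b)]
   cancel all those of [i (d b)] but the derivative along [c]. *)
Lemma lieD_coordE c b : lieD (coordvf c) b = fun x s => partial c (fun y => b y s) x.
Proof.
apply: funext => x; apply: funext => s.
rewrite /lieD /Defs.addf !contr_coordE !(dRE c) /= big_nat_recl // expr0 mul1r rem_nth0.
rewrite -addrA -big_split big1 ?addr0 //= => j _.
by rewrite rem_nth_cons exprS mulN1r mulNr addNr.
Qed.

Lemma dR_Pdiag c : dR (Pdiag c) = fun _ _ => 0.
Proof.
apply: funext => x; apply: funext => s; rewrite (dRE c) /Defs.Pdiag.
under eq_bigr => j _ do rewrite partial_coord.
case: s => [|p [|q [|r s]]].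
- by rewrite big_geq.
- by rewrite big_nat1 /= !mul0r mulr0.
- rewrite big_nat_recl // big_nat1 /= !eqseq_cons !andbT.
  by rewrite expr0 expr1 !mul1r (eq_sym c p) (eq_sym c q) mulrC mulN1r subrr.
- rewrite big_nat big1 // => j /andP[_ ltj].
  case E: (rem_nth j _ == [:: c]); last by rewrite mul0r mulr0.
  by move/eqP: E => /(congr1 size); rewrite size_rem_nth.
Qed.

End Forms.

Section Alternating.
Variables (R : realType) (n : nat).
Implicit Types (a b : Defs.form R n) (s t : seq 'I_n) (x : pt R n).

Definition alternating_at b x :=
  forall t (sg : 'S_(size t)), b x (permute sg) = psign R sg * b x t.

Definition alternating b := forall x, alternating_at b x.

Lemma sqr_psign m (sg : 'S_m) : psign R sg ^+ 2 = 1.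
Proof. by rewrite /psign -signr_odd sqrr_sign. Qed.

Lemma psign_lift m (j p : 'I_m.+1) (tau : 'S_m) :
  psign R (lift_perm j p tau) = (-1) ^+ (j + p)%N * psign R tau.
Proof. by rewrite /psign odd_lift_perm !signr_addb !signr_odd exprD mulrA. Qed.

Lemma permuteE (x0 : 'I_n) s (sg : 'S_(size s)) : permute sg = perm_seq x0 sg s.
Proof. by apply: eq_map => i; rewrite (tnth_nth x0). Qed.

Lemma size_permute s (sg : 'S_(size s)) : size (permute sg) = size s.
Proof. by rewrite size_map size_enum_ord. Qed.

Lemma alternating_perm_seq (x0 : 'I_n) b x : alternating_at b x ->
  forall m t (tau : 'S_m), size t = m -> b x (perm_seq x0 tau t) = psign R tau * b x t.
Proof. by move=> b_alt m t tau sz_t; subst m; rewrite -permuteE b_alt. Qed.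

Lemma wedge0l b x s : wedge (fun _ _ => 0) b x s = 0.
Proof.
rewrite /wedge big1 // => k _; rewrite big1 ?mulr0 // => sg _.
by rewrite mulr0 mul0r.
Qed.

Lemma wedge_deg0l a b x s : (forall t, size t != 0%N -> a x t = 0) ->
  alternating_at b x -> wedge a b x s = a x [::] * b x s.
Proof.
move=> a_deg0 b_alt; rewrite /wedge big_ord_recl [X in _ + X]big1 ?addr0; last first.
  move=> k _; rewrite big1 ?mulr0 // => sg _.
  rewrite a_deg0 ?mulr0 ?mul0r // size_takel ?size_permute //.
  exact: ltn_ord.
rewrite fact0 subn0 -natrM mul1n.
under eq_bigr => sg _ do rewrite take0 drop0 b_alt mulrACA -expr2 sqr_psign mul1r.
rewrite sumr_const card_Sn -[_ * _ *+ _]mulr_natl.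
by rewrite mulKf // pnatr_eq0 -lt0n fact_gt0.
Qed.

(* Grouped by the image [p] of [0], the permutations are [lift_perm 0 p tau]
   with [tau] in ['S_m], and the summand does not depend on [tau]. *)
Lemma sum_perm_take1 (x0 : 'I_n) m a b x s : size s = m.+1 -> alternating_at b x ->
  \sum_(sg : 'S_m.+1) psign R sg * a x (take 1 (perm_seq x0 sg s))
                                 * b x (drop 1 (perm_seq x0 sg s))
  = (m`!)%:R * \sum_(p < m.+1) (-1) ^+ p * a x [:: nth x0 s p] * b x (rem_nth p s).
Proof.
move=> sz_s b_alt; rewrite (sum_perm_lift ord0) mulr_sumr; apply: eq_bigr => p _.
have sz_rem : size (rem_nth p s) = m by rewrite size_rem_nth sz_s.
under eq_bigr => tau _.
  rewrite perm_seq_lift0 //= take0 drop0 (alternating_perm_seq x0 b_alt _ sz_rem).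
  by rewrite psign_lift (sqr1_mulK _ _ _ (sqr_psign tau)); over.
by rewrite sumr_const card_Sn mulr_natl.
Qed.

Lemma wedge_deg1l (x0 : 'I_n) a b x s : (forall t, size t != 1%N -> a x t = 0) ->
  alternating_at b x ->
  wedge a b x s = \sum_(0 <= p < size s) (-1) ^+ p * a x [:: nth x0 s p] * b x (rem_nth p s).
Proof.
move=> a_deg1 b_alt; rewrite /wedge.
under eq_bigr => k _ do under eq_bigr => sg _ do rewrite (permuteE x0).
case sz_s: (size s) => [|m].
  rewrite big_geq // big_ord1 [X in _ * X]big1 ?mulr0 // => sg _.
  by rewrite take0 a_deg1 ?mulr0 ?mul0r.
rewrite big_ord_recl big_ord_recl [X in _ + (_ + X)]big1 ?addr0; last first.
  move=> k _; rewrite [X in _ * X]big1 ?mulr0 // => sg _.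
  rewrite a_deg1 ?mulr0 ?mul0r // size_takel ?size_perm_seq //.
  exact: ltn_ord.
rewrite [X in _ * X + _]big1 ?mulr0 ?add0r; last first.
  by move=> sg _; rewrite take0 a_deg1 ?mulr0 ?mul0r.
rewrite /= (sum_perm_take1 x0 a sz_s b_alt) subSS subn0 mul1r mulKf ?big_mkord //.
Qed.

End Alternating.

Section AlternatingDerivatives.
Variables (R : realType) (n : nat) (b : Defs.form R n).
Hypothesis b_alt : alternating b.
Hypothesis b_der : forall t x v, derivable (fun y => b y t) x v.

Lemma alternating_partial (c : 'I_n) : alternating (fun x t => partial c (fun y => b y t) x).
Proof.
move=> x t sg /=.
have -> : (fun y => b y (permute sg)) = fun y => psign R sg * b y t.
  by apply: funext => y; rewrite b_alt.
by rewrite partialZ.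
Qed.

Lemma alternating_dR : alternating (dR b).
Proof.
move=> x t sg; case: t sg => [|c t] sg.
  have /size0nil -> : size (permute sg) = 0%N by rewrite size_permute.
  by rewrite /dR !big_ord0 mulr0.
rewrite (permuteE c) !(dRE c) size_perm_seq /= !big_mkord mulr_sumr.
rewrite [RHS](reindex_inj (@perm_inj _ sg)); apply: eq_bigr => j _ /=.
set p := sg j; set tau := unlift_perm j sg.
have -> : sg = lift_perm j p tau by rewrite lift_unlift_perm.
rewrite nth_perm_seq lift_perm_id (rem_nth_perm_seq c j p tau) //.
have sz_rem : size (rem_nth p (c :: t)) = size t by rewrite size_rem_nth.
have -> : (fun y => b y (perm_seq c tau (rem_nth p (c :: t)))) =
          (fun y => psign R tau * b y (rem_nth p (c :: t))).
  by apply: funext => y; rewrite (alternating_perm_seq c (b_alt y) _ sz_rem).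
have sgn_p2 : ((-1) ^+ p) ^+ 2 = 1 :> R by rewrite sqrr_sign.
by rewrite partialZ // psign_lift exprD (sqr1_mulK _ _ _ sgn_p2) mulrA.
Qed.

End AlternatingDerivatives.

Section FrolicherNijenhuisDifferential.
Variables (R : realType) (n : nat) (L : vform R n).
Hypothesis L_alt : forall i, alternating (L i).
Hypothesis L_der : forall i t x v, derivable (fun y => L i y t) x v.
Implicit Types (b c i : 'I_n) (s t : seq 'I_n) (x : pt R n).
Local Notation coordvf := (@coordvf R n).
Local Notation Pdiag := (@Pdiag R n).

(* Of the five terms of the bracket, the first and the fourth vanish because
   coordinate fields commute and d (x^c dx^c) = 0. *)
Lemma fn_dec_Pdiag (x0 : 'I_n) c b i x s :
  fn_dec 1 (Pdiag c) (coordvf c) (L b) (coordvf b) i x s =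
    (i == b)%:R * \sum_(0 <= p < size s) (-1) ^+ p *
       ((nth x0 s p == c)%:R * (x ord0 c * partial c (fun y => L b y (rem_nth p s)) x))
  - (c == b)%:R * ((i == c)%:R * (\sum_(0 <= p < size s) (-1) ^+ p *
       ((nth x0 s p == c)%:R * L b x (rem_nth p s)) + x ord0 c * dR (L b) x s)).
Proof.
have Pdiag_deg1 t : size t != 1%N -> Pdiag c x t = 0.
  by rewrite /Defs.Pdiag; case: (t =P [:: c]) => [-> | _]; rewrite ?mul0r.
rewrite /fn_dec lieb_coord dR_Pdiag wedge0l !mulr0 !mul0r add0r addr0.
rewrite !lieD_coordE contr_coordE /coordvf /=.
rewrite (wedge_deg1l x0 _ Pdiag_deg1); last first.
  exact: alternating_partial (L_alt b) (@L_der b) c x.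
rewrite (wedge_deg1l x0 (b := L b)); first last.
- exact: L_alt b x.
- move=> t; rewrite /Defs.Pdiag partial_coord.
  by case: (t =P [:: c]) => [-> | _]; rewrite ?mul0r.
rewrite wedge_deg0l; first last.
- exact: alternating_dR (L_alt b) (@L_der b) x.
- by move=> [|a t] // _; rewrite /Defs.Pdiag eqseq_cons andbF mul0r.
under [X in X * (i == b)%:R]eq_bigr => p _ do rewrite /Defs.Pdiag eqseq_cons andbT -!mulrA.
rewrite [X in _ - X * _ + _](_ : _ = (c == b)%:R * \sum_(0 <= p < size s)
    (-1) ^+ p * ((nth x0 s p == c)%:R * L b x (rem_nth p s))); last first.
  rewrite mulr_sumr; apply: eq_bigr => p _.
  by rewrite /Defs.Pdiag partial_coord eqseq_cons andbT; ring.
by rewrite /Defs.Pdiag eqseq_cons andbT (eq_sym b c) expr1; ring.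
Qed.

Lemma dFNE (x0 : 'I_n) i x s : dFN L i x s =
  \sum_(0 <= p < size s) (-1) ^+ p *
    ((x ord0 (nth x0 s p) - x ord0 i) * partial (nth x0 s p) (fun y => L i y (rem_nth p s)) x
     - (nth x0 s p == i)%:R * L i x (rem_nth p s)).
Proof.
rewrite /dFN /fnb.
under eq_bigr => c _ do
  rewrite (eq_bigr _ (fun b _ => fn_dec_Pdiag x0 c b i x s)) sumrB !sum_delta.
rewrite sumrB sum_delta (dRE x0) exchange_big /=.
under eq_bigr => p _ do rewrite -mulr_sumr sum_delta.
rewrite mulr_sumr -big_split -sumrB; apply: eq_bigr => p _ /=.
ring.
Qed.

Lemma dFN_nil i x : dFN L i x [::] = 0.
Proof. by rewrite (dFNE i) big_geq. Qed.

End FrolicherNijenhuisDifferential.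

Section Homotopy.
Variables (R : realType) (n : nat) (L : vform R n).
Hypothesis L_alt : forall i, alternating (L i).
Hypothesis L_der : forall i t x v, derivable (fun y => L i y t) x v.

Definition diag_contr : vform R n := fun b y t => - L b y (b :: t).

Lemma alternating_diag_contr b : alternating (diag_contr b).
Proof.
move=> x t sg; rewrite /diag_contr (permuteE b).
have -> : b :: perm_seq b sg t = perm_seq b (lift_perm ord0 ord0 sg) (b :: t).
  by rewrite perm_seq_lift0 ?rem_nth0.
rewrite (alternating_perm_seq b (L_alt b x) _ (erefl (size (b :: t)))) psign_lift.
by rewrite -[(ord0 + ord0)%N]/0%N expr0 mul1r mulrN.
Qed.

Lemma derivable_diag_contr b t x v : derivable (fun y => diag_contr b y t) x v.
Proof. exact: derivableN. Qed.

Lemma is_vform_diag_contr k : is_vform k.+1 L -> is_vform k diag_contr.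
Proof.
move=> L_form b; case: (L_form b) => L_smooth _ L_deg; split.
- by move=> s; apply: smoothN.
- exact: alternating_diag_contr.
- by move=> x s s_neq_k; rewrite /diag_contr L_deg ?oppr0.
Qed.

Lemma dFN_closed_exact : dFN L = @vzero R n -> L = dFN diag_contr.
Proof.
move=> L_closed; apply: funext => i; apply: funext => x; apply: funext => s.
have : dFN L i x (i :: s) = 0 by rewrite L_closed.
rewrite (dFNE L_alt L_der i) big_nat_recl // expr0 mul1r rem_nth0 [nth _ _ 0]/=.
rewrite subrr mul0r eqxx mul1r sub0r => /eqP; rewrite addrC subr_eq0 => /eqP <-.
rewrite (dFNE alternating_diag_contr derivable_diag_contr i).
apply: eq_bigr => p _; rewrite rem_nth_cons /diag_contr partialN // exprS.
ring.
Qed.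

End Homotopy.

Theorem proposition16p1 (R : realType) (n : nat) :
  forall (k : nat) (L : vform R n),
    is_vform k L -> dFN L = @vzero R n ->
    (k = 0%N -> L = @vzero R n) /\
    ((0 < k)%N -> exists M : vform R n, is_vform k.-1 M /\ L = dFN M).
Proof.
move=> k L L_form L_closed.
have L_alt i : alternating (L i) by case: (L_form i).
have L_der i t x v : derivable (fun y => L i y t) x v.
  by case: (L_form i) => L_smooth _ _; exact: smooth_derivable.
have L_exact := dFN_closed_exact L_alt L_der L_closed.
split => [k0 | k_gt0].
  apply: funext => i; apply: funext => x; apply: funext => -[|a s].
    rewrite L_exact.
    exact: dFN_nil (alternating_diag_contr L_alt) (derivable_diag_contr L_der) i x.
  by case: (L_form i) => _ _ ->; rewrite ?k0.
case: k k_gt0 L_form => // k _ L_form.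
by exists (diag_contr L); split => //; exact: is_vform_diag_contr.
Qed.
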